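(* For every (possibly infinite) $\mathcal{A}\subseteq\mathbb{A}$, every (reachable) state $s$ of a $\$$-bounded contract and every finite sequence of transactions $\vec{Y}$: (1) $\mathrm{xG}_{\mathcal{A}}(s,\vec{Y})$ is defined and is a finite integer; (2) if $\mathrm{xG}_{\mathcal{A}}(s,\vec{Y})>0$ then $\vec{Y}\notin\kappa_{\mathcal{A}}(\emptyset)^*$; (3) there exists a finite $\mathcal{A}_0\subseteq\mathcal{A}$ such that for every $\mathcal{B}$ with $\mathcal{A}_0\subseteq\mathcal{B}\subseteq\mathcal{A}$, $\mathrm{xG}_{\mathcal{A}_0}(s,\vec{Y})=\mathrm{xG}_{\mathcal{B}}(s,\vec{Y})$.
   Context: Fix a countably infinite set $\mathbb{A}$ of actors, a set $\mathbb{T}$ of token types and a set $\mathbb{X}$ of transactions. A wallet is a function $\mathbb{T}\to\mathbb{N}$; $\mathbb{W}_{\mathrm{fin}}$ is the set of finite-support wallets. A wallet state is $W:\mathbb{A}\to(\mathbb{T}\to\mathbb{N})$ satisfying the finite tokens axiom $\sum_{\tau}\sum_{a\in\mathbb{A}}W(a)(\tau)\in\mathbb{N}$. A contract consists of blockchain states $\mathbb{S}=\mathbb{C}\times\mathbb{W}$ (contract state, wallet state), a partial transition function $\mapsto:(\mathbb{S}\times\mathbb{X})\rightharpoonup\mathbb{S}$ and initial states $\mathbb{S}_0$. A transaction $x$ is valid in $s$ if $s\xmapsto{x}s'$ for some $s'$. For finite sequences, $s\xrightarrow{\varepsilon}s$, and $s\xrightarrow{\vec{Y}x}s'$ iff either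 $s\xrightarrow{\vec{Y}}s''\xmapsto{x}s'$, or $s\xrightarrow{\vec{Y}}s'$ and $x$ is not valid in $s'$. $s$ is reachable if $s_0\xrightarrow{\vec X}s$ for some $s_0\in\mathbb{S}_0$ and some $\vec X$. $W_{\mathcal{A}}(s)=\sum_{a\in\mathcal{A}}W(s)(a)$. A wealth function is an additive map $\$:\mathbb{W}_{\mathrm{fin}}\to\mathbb{N}$; $\$_{\mathcal{A}}(s)=\$(W_{\mathcal{A}}(s))$; the gain is $G_{\mathcal{A}}(s,\vec{X})=\$_{\mathcal{A}}(s')-\$_{\mathcal{A}}(s)$ where $s\xrightarrow{\vec X}s'$. The contract is $\$$-bounded if for every $s_0\in\mathbb{S}_0$ there is $n$ such that $\$_{\mathbb{A}}(s)<n$ for all $s$ reachable from $s_0$. A transaction deducibility function $\kappa:\mathcal{P}(\mathbb{A})\times\mathcal{P}(\mathbb{X})\to\mathcal{P}(\mathbb{X})$, $(\mathcal{A},\mathcal{X})\mapsto\kappa_{\mathcal{A}}(\mathcal{X})$, satisfies: extensivity $\mathcal{X}\subseteq\kappa_{\mathcal{A}}(\mathcal{X})$; idempotence $\kappa_{\mathcal{A}}(\kappa_{\mathcal{A}}(\mathcal{X}))=\kappa_{\mathcal{A}}(\mathcal{X})$; monotonicity in both arguments; continuity $\kappa_{\mathcal{A}}(\bigcup_i\mathcal{X}_i)=\bigcup_i\kappa_{\mathcal{A}}(\mathcal{X}_i)$ for increasing chains; finite causes (every finite $\mathcal{X}_0$ is contained in $\kappa_{\mathcal{A}_0}(\emptyset)$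 for some finite $\mathcal{A}_0$); private knowledge ($\kappa_{\mathcal{A}}(\emptyset)\subseteq\kappa_{\mathcal{A}'}(\emptyset)$ implies $\mathcal{A}\subseteq\mathcal{A}'$); no shared secrets ($\kappa_{\mathcal{A}}(\mathcal{X})\cap\kappa_{\mathcal{B}}(\mathcal{X})\subseteq\kappa_{\mathcal{A}\cap\mathcal{B}}(\mathcal{X})$). $\mathcal{X}^*$ denotes the finite sequences over $\mathcal{X}$. The unrealized gain is $\mathrm{uG}_{\mathcal{A}}(s)=\max\{G_{\mathcal{A}}(s,\vec{Y}):\vec{Y}\in\kappa_{\mathcal{A}}(\emptyset)^*\}$, and the external gain is $\mathrm{xG}_{\mathcal{A}}(s,\vec{Y})=G_{\mathcal{A}}(s,\vec{Y})-\mathrm{uG}_{\mathcal{A}}(s)$. *)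

From HB Require Import structures.
From mathcomp Require Import all_boot all_order all_algebra.
From mathcomp Require Import boolp classical_sets functions cardinality fsbigop.
Set Implicit Arguments. Unset Strict Implicit. Unset Printing Implicit Defensive.
Import Order.TTheory GRing.Theory Num.Theory.
Local Open Scope classical_set_scope.

Section Model.
Variables (Actor : countType) (Token : choiceType) (Xtr : choiceType).

Definition wallet := Token -> nat.
Definition finsupp_wallet (w : wallet) : Prop := finite_set [set t | w t != 0%N].

(* Finite tokens axiom: sum_tau sum_a W a tau is a natural number, i.e. only
   finitely many (a, tau) carry a nonzero amount. *)
Definition finite_tokens (W : Actor -> wallet) : Prop :=
  finite_set [set p : Actor * Token | W p.1 p.2 != 0%N].

Definition wstate := {W : Actor -> wallet | finite_tokens W}.

Definition W_of (A : set Actor) (W : wstate) : wallet :=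
  fun t => \big[addn/0%N]_(a \in A) (proj1_sig W a t).

Definition wealth_fun (wealth : wallet -> nat) : Prop :=
  forall w1 w2 : wallet, finsupp_wallet w1 -> finsupp_wallet w2 ->
    wealth (fun t => (w1 t + w2 t)%N) = (wealth w1 + wealth w2)%N.

Record deducibility (kappa : set Actor -> set Xtr -> set Xtr) : Prop := {
  kappa_ext : forall A Xs, Xs `<=` kappa A Xs;
  kappa_idem : forall A Xs, kappa A (kappa A Xs) = kappa A Xs;
  kappa_mono : forall A A' Xs Xs', A `<=` A' -> Xs `<=` Xs' ->
                 kappa A Xs `<=` kappa A' Xs';
  kappa_cont : forall A (F : nat -> set Xtr), (forall i, F i `<=` F i.+1) ->
                 kappa A (\bigcup_i F i) = \bigcup_i kappa A (F i);
  kappa_fincause : forall X0 : set Xtr, finite_set X0 ->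
                 exists2 A0 : set Actor, finite_set A0 & X0 `<=` kappa A0 set0;
  kappa_private : forall A A', kappa A set0 `<=` kappa A' set0 -> A `<=` A';
  kappa_nosecret : forall A B Xs, kappa A Xs `&` kappa B Xs `<=` kappa (A `&` B) Xs
}.

Definition star (S : set Xtr) : set (seq Xtr) :=
  [set Y | forall x, x \in Y -> S x].

Section Contract.
(* A contract: contract states C, blockchain states C * wstate, partial
   transition function step, initial states S0. *)
Variables (C : Type) (step : C * wstate -> Xtr -> option (C * wstate))
  (S0 : set (C * wstate)).

Definition valid (s : C * wstate) (x : Xtr) : Prop := step s x <> None.

(* s --Y--> s' : invalid transactions are skipped; the relation is functional,
   so we define the resulting state directly. *)
Definition run (s : C * wstate) (Y : seq Xtr) : C * wstate :=
  foldl (fun s x => match step s x with Some s' => s' | None => s end) s Y.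

Definition reachable_from (s0 s : C * wstate) : Prop := exists Xs, s = run s0 Xs.
Definition reachable (s : C * wstate) : Prop := exists2 s0, S0 s0 & reachable_from s0 s.

Variable wealth : wallet -> nat.

Definition wealth_of (A : set Actor) (s : C * wstate) : nat := wealth (W_of A s.2).

Definition bounded : Prop :=
  forall s0, S0 s0 -> exists n : nat,
    forall s, reachable_from s0 s -> (wealth_of setT s < n)%N.

Definition gain (A : set Actor) (s : C * wstate) (Y : seq Xtr) : int :=
  ((wealth_of A (run s Y))%:Z - (wealth_of A s)%:Z)%R.

Variable kappa : set Actor -> set Xtr -> set Xtr.

Definition is_uG (A : set Actor) (s : C * wstate) (v : int) : Prop :=
  (exists2 Y, star (kappa A set0) Y & gain A s Y = v) /\
  (forall Y, star (kappa A set0) Y -> (gain A s Y <= v)%R).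

(* Unrealized gain: the maximum (when it exists; a junk value 0 otherwise). *)
Definition uG (A : set Actor) (s : C * wstate) : int := xget 0%R (is_uG A s).

Definition xG (A : set Actor) (s : C * wstate) (Y : seq Xtr) : int :=
  (gain A s Y - uG A s)%R.

End Contract.
End Model.

From HB Require Import structures.
From mathcomp Require Import all_boot all_order all_algebra.
From mathcomp Require Import boolp classical_sets functions cardinality fsbigop.
From mathcomp Require Import zify.
Set Implicit Arguments. Unset Strict Implicit. Unset Printing Implicit Defensive.
Import Order.TTheory GRing.Theory Num.Theory.
Local Open Scope classical_set_scope.

(* Proof idea.
   (1) Along any run from a reachable state the total wealth stays below the
       bound n of the contract, so the wealths of A reachable by sequences of
       kappa_A(empty)^* form a nonempty set of naturals bounded by n; its
       maximum gives the maximal gain, i.e. uG_A(s) exists.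
   (2) Since uG_A(s) bounds every gain by a sequence of kappa_A(empty)^*, the
       external gain of such a sequence is nonpositive.
   (3) The wealth of A in a state only depends on the finitely many members
       of A holding tokens there.  Take A0 to be the members of A holding
       tokens in s, in s after Y, or in s after an optimal sequence Ys, plus
       those of A in a finite cause A1 of Ys.  For A0 <= B <= A, B's gains on
       these states equal A's, Ys is still deducible by B (no shared secrets
       between A and A1), and B's other gains are at most A's; hence uG and
       xG of B coincide with those of A. *)

Section Wallets.
Variables (Actor : countType) (Token : choiceType).

Definition holders (W : wstate Actor Token) : set Actor :=
  [set a | exists t, proj1_sig W a t <> 0%N].

Lemma holders_fin (W : wstate Actor Token) : finite_set (holders W).
Proof.
case: W => W HW /=; apply: (sub_finite_set _ (finite_image fst HW)).
by move=> a [t /= Ha]; exists (a, t) => //=; apply/eqP.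
Qed.

Lemma W_of_split (A B : set Actor) (W : wstate Actor Token) t : B `<=` A ->
  W_of A W t = (W_of B W t + W_of (A `\` B) W t)%N.
Proof.
move=> BA; rewrite /W_of.
rewrite fsbig_supp [X in (X + _)%N]fsbig_supp [X in (_ + X)%N]fsbig_supp.
rewrite (fsbigID B); last first.
  apply: finite_setIr; apply: (sub_finite_set _ (holders_fin W)).
  by move=> a /= Ha; exists t.
congr addn; apply: eq_fsbigl; apply/seteqP; split => a /=.
- by move=> [[]].
- by move=> [Ba Ha]; split => //; split => //; apply: BA.
- by move=> [[Aa Ha] Ba].
- by move=> [[Aa Ba] Ha].
Qed.

Lemma W_of_finsupp (A : set Actor) (W : wstate Actor Token) :
  finsupp_wallet (W_of A W).
Proof.
case: W => W HW; apply: (sub_finite_set _ (finite_image snd HW)).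
move=> t /= Ht; apply: contrapT => nex; move/eqP: Ht; apply.
apply: fsbig1 => a Aa; apply: contrapT => H; apply: nex.
by exists (a, t) => //=; apply/eqP.
Qed.

Lemma W_of_no_holders (A : set Actor) (W : wstate Actor Token) :
  A `&` holders W = set0 -> W_of A W = fun=> 0%N.
Proof.
move=> AH; apply/funext => t; apply: fsbig1 => a Aa.
apply: contrapT => Ha; suff : (A `&` holders W) a by rewrite AH.
by split => //; exists t.
Qed.

Variable wealth : wallet Token -> nat.
Hypothesis Hwealth : wealth_fun wealth.

Lemma wealth0 : wealth (fun=> 0%N) = 0%N.
Proof.
have F : finsupp_wallet (fun _ : Token => 0%N).
  by apply: (sub_finite_set (B := set0)) => // t /=; rewrite eqxx.
have := Hwealth F F.
change (fun _ : Token => (0 + 0)%N) with (fun _ : Token => 0%N); lia.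
Qed.

Lemma wealth_split (A B : set Actor) (W : wstate Actor Token) : B `<=` A ->
  wealth (W_of A W) = (wealth (W_of B W) + wealth (W_of (A `\` B) W))%N.
Proof.
move=> BA; rewrite -(Hwealth (W_of_finsupp B W) (W_of_finsupp (A `\` B) W)).
by congr wealth; apply/funext => t; apply: W_of_split.
Qed.

Lemma wealth_mono (A B : set Actor) (W : wstate Actor Token) : B `<=` A ->
  (wealth (W_of B W) <= wealth (W_of A W))%N.
Proof. by move=> BA; rewrite (wealth_split W BA) leq_addr. Qed.

Lemma wealth_local (A B : set Actor) (W : wstate Actor Token) : B `<=` A ->
  A `&` holders W `<=` B -> wealth (W_of B W) = wealth (W_of A W).
Proof.
move=> BA HB; rewrite (wealth_split W BA) (W_of_no_holders (A := A `\` B)) ?wealth0 ?addn0 //.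
by apply/seteqP; split => // a [[Aa Ba] Ha]; apply: Ba; apply: HB.
Qed.

End Wallets.

Section Contract.
Variables (Actor : countType) (Token : choiceType) (Xtr : choiceType) (C : Type)
  (step : C * wstate Actor Token -> Xtr -> option (C * wstate Actor Token))
  (S0 : set (C * wstate Actor Token)) (wealth : wallet Token -> nat)
  (kappa : set Actor -> set Xtr -> set Xtr).
Hypothesis Hwealth : wealth_fun wealth.
Hypothesis Hbounded : bounded step S0 wealth.

Lemma run_cat s X Y : run step s (X ++ Y) = run step (run step s X) Y.
Proof. by rewrite /run foldl_cat. Qed.

Lemma bound_run s : reachable step S0 s ->
  exists n, forall Y, (wealth_of wealth setT (run step s Y) < n)%N.
Proof.
case=> s0 Hs0 [X ->]; have [n Hn] := Hbounded Hs0; exists n => Y.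
by rewrite -run_cat; apply: Hn; exists (X ++ Y).
Qed.

Lemma uG_ex (A : set Actor) s : reachable step S0 s ->
  exists v, is_uG step wealth kappa A s v.
Proof.
move=> /bound_run [n Hn].
pose P k := `[< exists2 Y, star (kappa A set0) Y &
                  wealth_of wealth A (run step s Y) = k >].
have exP : exists k, P k.
  by exists (wealth_of wealth A s); apply/asboolP; exists [::].
have ubP k : P k -> (k <= n)%N.
  move=> /asboolP [Y _ <-].
  exact: leq_trans (wealth_mono Hwealth _ (subsetT A)) (ltnW (Hn Y)).
case: (ex_maxnP exP ubP) => m /asboolP [Y HY Hm] Hmax.
exists (m%:Z - (wealth_of wealth A s)%:Z)%R; split.
  by exists Y => //; rewrite /gain Hm.
by move=> Y' HY'; rewrite /gain lerD2r lez_nat; apply/Hmax/asboolP; exists Y'.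
Qed.

Lemma uG_uniq (A : set Actor) s v w : is_uG step wealth kappa A s v ->
  is_uG step wealth kappa A s w -> v = w.
Proof.
move=> [[Y HY <-] Hv] [[Y' HY' <-] Hw].
by apply/le_anti/andP; split; [apply: Hw | apply: Hv].
Qed.

Lemma uG_spec (A : set Actor) s : reachable step S0 s ->
  is_uG step wealth kappa A s (uG step wealth kappa A s).
Proof. by move=> /(uG_ex A) ex; apply: xgetPex. Qed.

Lemma xG_star_nonpos (A : set Actor) s Y : reachable step S0 s ->
  star (kappa A set0) Y -> (xG step wealth kappa A s Y <= 0)%R.
Proof.
by move=> /(uG_spec A) [_ Hmax] /Hmax; rewrite /xG subr_le0.
Qed.

Lemma gain_local (A B : set Actor) s Y : B `<=` A ->
  A `&` holders s.2 `<=` B -> A `&` holders (run step s Y).2 `<=` B ->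
  gain step wealth B s Y = gain step wealth A s Y.
Proof. by move=> BA Hs HsY; rewrite /gain /wealth_of (wealth_local Hwealth BA Hs) (wealth_local Hwealth BA HsY). Qed.

Hypothesis Hkappa : deducibility kappa.

Lemma xG_local (A : set Actor) s Y : reachable step S0 s ->
  exists A0, [/\ finite_set A0, A0 `<=` A & forall B, A0 `<=` B -> B `<=` A ->
    xG step wealth kappa B s Y = xG step wealth kappa A s Y].
Proof.
move=> Hr; have [[Ys HYs gainYs] HuA] := uG_spec A Hr.
have [A1 A1fin HA1] := kappa_fincause Hkappa (finite_seq Ys).
pose A0 := A `&` A1 `|` A `&` holders s.2 `|` A `&` holders (run step s Y).2
  `|` A `&` holders (run step s Ys).2.
exists A0; split.
- rewrite /A0 !finite_setU; split; [split; [split|]|]; apply: finite_setIr;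
    [exact: A1fin | exact: holders_fin ..].
- by move=> a [[[[]|[]]|[]]|[]].
move=> B A0B BA.
have Hs : A `&` holders s.2 `<=` B by move=> a Ha; apply: A0B; left; left; right.
have HsY : A `&` holders (run step s Y).2 `<=` B
  by move=> a Ha; apply: A0B; left; right.
have HsYs : A `&` holders (run step s Ys).2 `<=` B by move=> a Ha; apply: A0B; right.
have YsB : star (kappa B set0) Ys.
  move=> x Hx; apply: (kappa_mono Hkappa (A := A `&` A1) (Xs := set0)) => //.
    by move=> a Ha; apply: A0B; left; left; left.
  by apply: (kappa_nosecret Hkappa); split; [exact: HYs | exact: HA1].
have gain_le Y' : (gain step wealth B s Y' <= gain step wealth A s Y')%R.
  rewrite /gain /wealth_of (wealth_local Hwealth BA Hs) lerD2r lez_nat.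
  exact: wealth_mono.
have uB : is_uG step wealth kappa B s (uG step wealth kappa A s).
  split; first by exists Ys; rewrite // (gain_local BA Hs HsYs).
  move=> Y' HY'; apply: le_trans (gain_le Y') (HuA _ _).
  by move=> x /HY'; apply: (kappa_mono Hkappa).
by rewrite /xG (gain_local BA Hs HsY) (uG_uniq (uG_spec B Hr) uB).
Qed.

End Contract.

Theorem mainTheorem8
  (Actor : countType) (Hinf : infinite_set [set: Actor])
  (Token : choiceType) (Xtr : choiceType)
  (C : Type) (step : C * wstate Actor Token -> Xtr -> option (C * wstate Actor Token))
  (S0 : set (C * wstate Actor Token))
  (wealth : wallet Token -> nat) (Hwealth : wealth_fun wealth)
  (kappa : set Actor -> set Xtr -> set Xtr) (Hkappa : deducibility kappa)
  (Hbounded : bounded step S0 wealth) :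
  forall (A : set Actor) (s : C * wstate Actor Token) (Y : seq Xtr),
    reachable step S0 s ->
    [/\ is_uG step wealth kappa A s (uG step wealth kappa A s),
        (0 < xG step wealth kappa A s Y)%R -> ~ star (kappa A set0) Y
      & exists A0 : set Actor, [/\ finite_set A0, A0 `<=` A &
          forall B : set Actor, A0 `<=` B -> B `<=` A ->
            xG step wealth kappa A0 s Y = xG step wealth kappa B s Y]].
Proof.
move=> A s Y Hr; split.
- exact: uG_spec Hwealth Hbounded A s Hr.
- by move=> Hpos /(xG_star_nonpos Hwealth Hbounded Hr); rewrite leNgt Hpos.
- have [A0 [A0fin A0A HA0]] := xG_local Hwealth Hbounded Hkappa A Y Hr.
  by exists A0; split => // B A0B BA; rewrite HA0 // HA0.
Qed.
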